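(* Let $f$ be a participatory budgeting rule that satisfies Extended Justified Representation (EJR). Then for every ordinary approval-based PB instance $I=(N,\mathcal{T},B,\mathrm{cost},\mathcal{A})$ and every nonempty $T\subseteq\mathcal{T}$, \[ d_f(T)\;\ge\;\frac{\min_{t\in T}\mathrm{cost}(t)}{\max_{t\in T}\mathrm{cost}(t)}\cdot\frac{1}{2}\cdot\left(\frac{\mathrm{cost}(T)}{\max_{t\in T}\mathrm{cost}(t)}-1\right). \]
   Context: An approval-based PB instance is $I=(N,\mathcal{T},B,\mathrm{cost},\mathcal{A})$: $N$ is a set of $n$ voters, $\mathcal{T}$ a finite set of projects, $B>0$ a budget, $\mathrm{cost}:\mathcal{T}\to\mathbb{R}_{>0}$, with $\mathrm{cost}(S)=\sum_{t\in S}\mathrm{cost}(t)$, and $A_i\subseteq\mathcal{T}$ the projects approved by voter $i$. A PB rule $f$ maps each instance to $f(I)\subseteq\mathcal{T}$ with $\mathrm{cost}(f(I))\le B$. The instance is ordinary if $\mathrm{cost}(t)\cdot n\ge B$ for every project $t\in\mathcal{T}$. For $T\subseteq\mathcal{T}$, $V\subseteq N$ is $T$-cohesive if $T\subseteq\bigcap_{i\in V}A_i$ and $\mathrm{cost}(T)/B\le|V|/n$; $\mathcal{V}(T)$ is the set of all $T$-cohesive groups. $\mathrm{avg}_W(V)=\frac{1}{|V|}\sum_{i\in V}|W\cap A_i|$. The proportionality degree is $d_f(T)=\sup\{g:\ \min_{V\in\mathcal{V}(T)}\mathrm{avg}_{f(I)}(V)\ge\min(|T|,g)\}$. A rule $f$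 satisfies EJR if for every instance $I$, every $T\subseteq\mathcal{T}$ and every $T$-cohesive group $V$, there is a voter $i\in V$ with $|A_i\cap f(I)|\ge|T|$. *)

From HB Require Import structures.
From mathcomp Require Import all_boot all_order all_algebra.
From mathcomp Require Import all_classical all_reals ereal.
Set Implicit Arguments. Unset Strict Implicit. Unset Printing Implicit Defensive.
Import Order.TTheory GRing.Theory Num.Theory.
Local Open Scope ring_scope.

Record PBInstance (R : realType) := {
  nv : nat;
  np : nat;
  budget : R;
  cost : 'I_np -> R;
  appr : 'I_nv -> {set 'I_np};
  budget_pos : 0 < budget;
  cost_pos : forall t, 0 < cost t
}.

Arguments cost {R} p _.
Arguments appr {R} p _.

Section Defs.
Variable R : realType.

Definition costS (I : PBInstance R) (S : {set 'I_(np I)}) : R :=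
  \sum_(t in S) cost I t.

Record PBRule := {
  rule_fun :> forall I : PBInstance R, {set 'I_(np I)};
  rule_feasible : forall I : PBInstance R, costS (rule_fun I) <= budget I
}.

Definition ordinary (I : PBInstance R) : Prop :=
  forall t, budget I <= cost I t * (nv I)%:R.

Definition cohesive (I : PBInstance R) (T : {set 'I_(np I)}) (V : {set 'I_(nv I)}) : Prop :=
  [/\ V != finset.set0,
      T \subset \bigcap_(i in V) appr I i
    & costS T / budget I <= #|V|%:R / (nv I)%:R].

Definition avg (I : PBInstance R) (W : {set 'I_(np I)}) (V : {set 'I_(nv I)}) : R :=
  (\sum_(i in V) #|W :&: appr I i|%:R) / #|V|%:R.

Definition EJR (f : PBRule) : Prop :=
  forall (I : PBInstance R) (T : {set 'I_(np I)}) (V : {set 'I_(nv I)}),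
    cohesive T V -> exists2 i, i \in V & (#|T| <= #|appr I i :&: f I|)%N.

(* proportionality degree d_f(T), as an extended real (sup may be +oo) *)
Definition prop_degree (f : PBRule) (I : PBInstance R) (T : {set 'I_(np I)}) : \bar R :=
  ereal_sup [set x%:E | x in [set x : R |
     forall V : {set 'I_(nv I)}, cohesive T V -> Num.min (#|T|%:R) x <= avg (f I) V]].

Definition cmax (I : PBInstance R) (T : {set 'I_(np I)}) : R :=
  \big[Num.max/0]_(t in T) cost I t.

(* for nonempty T this is min_{t in T} cost t *)
Definition cmin (I : PBInstance R) (T : {set 'I_(np I)}) : R :=
  \big[Num.min/cmax T]_(t in T) cost I t.

End Defs.

From HB Require Import structures.
From mathcomp Require Import all_boot all_order all_algebra.
From mathcomp Require Import all_classical all_reals ereal.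
From mathcomp Require Import ring lra zify.
Set Implicit Arguments.
Unset Strict Implicit.
Unset Printing Implicit Defensive.
Import Order.TTheory GRing.Theory Num.Theory.

(* Let k = |T| and let V be T-cohesive.  For l < k, the l+1 cheapest projects
   of T cost at most (l+1)/k * cost(T).  Hence if more than a fraction (l+1)/k
   of V had at most l approved winners, those voters would be cohesive for
   these l+1 projects and EJR would give one of them l+1 approved winners.
   So at most (l+1)/k of V has satisfaction <= l, and summing over l < k the
   average satisfaction of V is at least (k-1)/2.  Since cmin/cmax <= 1 and
   cost(T)/cmax <= k, this dominates the stated bound. *)

Lemma sum_ord_ltn (k m : nat) : \sum_(l < k) (l < m) = minn k m.
Proof.
elim: k => [|k IH]; first by rewrite big_ord0 min0n.
by rewrite big_ord_recr /= IH; case: ltnP; lia.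
Qed.

Lemma double_sum_ord_subS (k : nat) : (\sum_(l < k) (k - l.+1)).*2 = k * k.-1.
Proof.
elim: k => [|k IH]; first by rewrite big_ord0.
rewrite big_ord_recl subn1 /=.
under eq_bigr => l _ do rewrite /bump /= add1n subSS.
rewrite doubleD IH; case: k {IH} => [|k] /=; lia.
Qed.

Lemma card_set_in_sum (J : finType) (V : {set J}) (P : pred J) :
  #|[set i in V | P i]| = \sum_(i in V) P i.
Proof.
rewrite -sum1dep_card big_mkcondr /=.
by apply: eq_bigr => i _; case: (P i).
Qed.

Lemma sum_ge_of_tail_bound (J : finType) (V : {set J}) (s : J -> nat) (k : nat) :
  (forall l, l < k -> k * #|[set i in V | s i <= l]| <= l.+1 * #|V|) ->
  #|V| * k.-1 <= (\sum_(i in V) s i).*2.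
Proof.
move=> low_le; have [->|k_gt0] := posnP k; first by rewrite muln0.
have high_ge (l : 'I_k) : #|V| * (k - l.+1) <= k * #|[set i in V | l < s i]|.
  have split_V : #|[set i in V | s i <= l]| + #|[set i in V | l < s i]| = #|V|.
    rewrite !card_set_in_sum -big_split -sum1_card /=.
    by apply: eq_bigr => i _; rewrite leqNgt; case: (l < s i).
  by move: (ltn_ord l) (low_le l (ltn_ord l)); nia.
have sum_ge : \sum_(l < k) #|[set i in V | l < s i]| <= \sum_(i in V) s i.
  rewrite (eq_bigr (fun l : 'I_k => \sum_(i in V) (l < s i))); last first.
    by move=> l _; apply: card_set_in_sum.
  rewrite exchange_big /=; apply: leq_sum => i _.
  by rewrite sum_ord_ltn geq_minr.
have weighted : #|V| * \sum_(l < k) (k - l.+1) <= k * \sum_(i in V) s i.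
  rewrite big_distrr; apply: leq_trans (leq_mul (leqnn k) sum_ge).
  by rewrite big_distrr; apply: leq_sum => l _; exact: high_ge.
by rewrite -(leq_pmul2l k_gt0) mulnCA -double_sum_ord_subS -!muln2; nia.
Qed.

Local Open Scope ring_scope.

Section CheapSubsets.
Variables (R : realDomainType) (T : finType) (c : T -> R).

Lemma exists_ge_mean (S : {set T}) :
  S != finset.set0 -> exists2 t, t \in S & \sum_(u in S) c u <= c t * #|S|%:R.
Proof.
move=> S_n0; apply/exists_inP; apply: contraT => /exists_inPn all_lt.
have: \sum_(t in S) c t * #|S|%:R < \sum_(t in S) \sum_(u in S) c u.
  apply: ltr_sum.
    by case/set0Pn: S_n0 => t tS; apply/hasP; exists t; rewrite ?mem_index_enum.
  by move=> t /all_lt; rewrite -ltNge.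
by rewrite -big_distrl /= sumr_const mulr_natr ltxx.
Qed.

Lemma exists_sum_setD1_le (S : {set T}) : S != finset.set0 ->
  exists2 t, t \in S &
    #|S|%:R * \sum_(u in S :\ t) c u <= #|S|.-1%:R * \sum_(u in S) c u.
Proof.
move=> S_n0; have [t tS le_sum_ct] := exists_ge_mean S_n0.
exists t => //; move: le_sum_ct.
have S_gt0 : (0 < #|S|)%N by rewrite card_gt0.
by rewrite (big_setD1 t tS) /= -(prednK S_gt0) /= -natr1; nra.
Qed.

Lemma exists_cheap_subset (S : {set T}) (k : nat) : (k <= #|S|)%N ->
  exists2 S' : {set T}, S' \subset S &
    #|S'| = k /\ #|S|%:R * \sum_(u in S') c u <= k%:R * \sum_(u in S) c u.
Proof.
move=> le_kS; rewrite -(subKn le_kS).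
elim: (#|S| - k)%N (leq_subr k #|S|) => [|d IH] le_dS.
  by exists S; rewrite // subn0 mulrC.
have [S1 sub_S1S [card_S1 cost_S1]] := IH (ltnW le_dS).
have S1_n0 : S1 != finset.set0 by rewrite -card_gt0 card_S1 subn_gt0.
have [t tS1 cost_S1t] := exists_sum_setD1_le S1_n0.
exists (S1 :\ t); first exact: fintype.subset_trans (subD1set S1 t) sub_S1S.
rewrite -subnSK // in card_S1 cost_S1.
split; first by have := cardsD1 t S1; rewrite tS1 card_S1 add1n => -[<-].
have := ler0n R #|S|; have := ler0n R (#|S| - d.+1).
move: cost_S1t cost_S1; rewrite card_S1 /= -natr1; nra.
Qed.

End CheapSubsets.

Section Instance.
Variables (R : realType) (I : PBInstance R).
Implicit Types (T S : {set 'I_(np I)}) (V L : {set 'I_(nv I)}).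

Lemma costS_ge0 T : 0 <= costS T.
Proof. by apply: sumr_ge0 => t _; exact: ltW (cost_pos t). Qed.

Lemma cost_le_cmax T t : t \in T -> cost I t <= cmax T.
Proof. by move=> tT; rewrite /cmax (bigD1 t) //= le_max lexx. Qed.

Lemma cmax_gt0 T : T != finset.set0 -> 0 < cmax T.
Proof.
by case/set0Pn=> t tT; apply: lt_le_trans (cost_pos t) (cost_le_cmax tT).
Qed.

Lemma cmax_ge0 T : 0 <= cmax T.
Proof.
apply: (big_ind (fun x => 0 <= x)) => //; first by move=> x y; rewrite le_max => ->.
by move=> t _; exact: ltW (cost_pos t).
Qed.

Lemma cmin_ge0 T : 0 <= cmin T.
Proof.
apply: (big_ind (fun x => 0 <= x)); first exact: cmax_ge0.
  by move=> x y x_ge0 y_ge0; rewrite le_min x_ge0.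
by move=> t _; exact: ltW (cost_pos t).
Qed.

Lemma cmin_le_cmax T : cmin T <= cmax T.
Proof.
apply: (big_ind (fun x => x <= cmax T)) => //; first by move=> x y; rewrite ge_min => ->.
by move=> t; exact: cost_le_cmax.
Qed.

Lemma costS_le_card_cmax T : costS T <= #|T|%:R * cmax T.
Proof.
rewrite /costS mulr_natl -sumr_const.
by apply: ler_sum => t; exact: cost_le_cmax.
Qed.

Lemma cohesiveS T S V L :
  cohesive T V -> S \subset T -> L \subset V -> L != finset.set0 ->
  costS S * #|V|%:R <= costS T * #|L|%:R -> cohesive S L.
Proof.
case=> V_n0 /bigcapsP T_appr cost_T sub_ST sub_LV L_n0 cost_S.
split=> //.
  apply/bigcapsP => i iL; apply: fintype.subset_trans sub_ST _.
  exact: T_appr (fintype.subsetP sub_LV i iL).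
have V_gt0 : 0 < #|V|%:R :> R by rewrite ltr0n card_gt0.
have B_gt0 := budget_pos I.
rewrite -(ler_pM2r V_gt0).
have -> : #|L|%:R / (nv I)%:R * #|V|%:R = #|V|%:R / (nv I)%:R * #|L|%:R :> R by ring.
apply: le_trans (ler_wpM2r (ler0n _ _) cost_T).
by rewrite mulrAC [X in _ <= X]mulrAC ler_pM2r ?invr_gt0.
Qed.

Variables (f : PBRule R).
Hypothesis f_EJR : EJR f.
Local Notation sat i := #|f I :&: appr I i|.

Lemma EJR_few_unsatisfied T V l : cohesive T V -> (l < #|T|)%N ->
  (#|T| * #|[set i in V | sat i <= l]| <= l.+1 * #|V|)%N.
Proof.
move=> cohV lt_lT; set L := [set i in V | (sat i <= l)%N].
rewrite leqNgt; apply/negP => many_low.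
have [T' sub_T'T [card_T' cost_T']] := exists_cheap_subset (cost I) lt_lT.
have L_n0 : L != finset.set0.
  by rewrite -card_gt0 lt0n; apply: contraTneq many_low => ->; rewrite muln0.
have cohL : cohesive T' L.
  apply: cohesiveS cohV sub_T'T _ L_n0 _.
    by apply/fintype.subsetP => i; rewrite inE => /andP[].
  have := ltnW many_low; rewrite -(ler_nat R) !natrM.
  have := costS_ge0 T; have := ler0n R #|V|.
  have : 0 < #|T|%:R :> R by rewrite ltr0n (leq_ltn_trans _ lt_lT).
  by move: cost_T'; rewrite /costS; nra.
have [i] := f_EJR cohL.
by rewrite inE card_T' => /andP[_]; rewrite finset.setIC; lia.
Qed.

Lemma EJR_avg_ge T V : cohesive T V -> #|T|.-1%:R / 2 <= avg (f I) V.
Proof.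
move=> cohV; have [V_n0 _ _] := cohV.
have := @sum_ge_of_tail_bound _ V (fun i => sat i) #|T|
  (fun l => EJR_few_unsatisfied (l := l) cohV).
rewrite -(ler_nat R) -muln2 !natrM natr_sum.
rewrite /avg ler_pdivlMr ?ltr0n ?card_gt0 //; lra.
Qed.

End Instance.

Theorem theorem3 (R : realType) (f : PBRule R) (hf : EJR f)
  (I : PBInstance R) (hI : ordinary I) (T : {set 'I_(np I)}) (hT : T != finset.set0) :
  (((cmin T / cmax T) * (1 / 2) * (costS T / cmax T - 1))%:E <= prop_degree f T)%E.
Proof.
set bound := cmin T / cmax T * (1 / 2) * (costS T / cmax T - 1).
have cmax_gt0 := cmax_gt0 hT.
have ratio_ge0 : 0 <= cmin T / cmax T by rewrite divr_ge0 ?cmin_ge0 ?ltW.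
have ratio_le1 : cmin T / cmax T <= 1 by rewrite ler_pdivrMr ?mul1r ?cmin_le_cmax.
have q_le_card : costS T / cmax T <= #|T|%:R by rewrite ler_pdivrMr ?costS_le_card_cmax.
have card_ge1 : 1 <= #|T|%:R :> R by rewrite ler1n card_gt0.
have bound_le : bound <= #|T|.-1%:R / 2.
  by rewrite /bound -subn1 natrB ?card_gt0 //; nra.
apply: ereal_sup_ubound; exists bound => // V cohV.
by rewrite ge_min (le_trans bound_le (EJR_avg_ge hf cohV)) orbT.
Qed.
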